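(* Let $P$ be a finite graded bowtie-free poset of rank $n$ with $\hat0,\hat1$ and a good $\mathcal{H}_n(0)$ action $U_1,\dots,U_{n-1}$, let $\mathfrak m_0$ be the unique maximal chain with empty descent set, and let $\mathfrak m$ be any maximal chain. If $U_{i_1}\cdots U_{i_r}(\mathfrak m)=\mathfrak m_0$ and $U_{j_1}\cdots U_{j_s}(\mathfrak m)=\mathfrak m_0$ are both restless, then $s_{i_1}s_{i_2}\cdots s_{i_r}=s_{j_1}s_{j_2}\cdots s_{j_s}$ as permutations of $[n]$.
   Context: $s_i$ is the adjacent transposition $(i\ i+1)$ of $[n]$. Bowtie-free: no distinct $a,b,c,d$ with $a$ and $b$ each covering both $c$ and $d$. A good $\mathcal{H}_n(0)$ action is a family $U_1,\dots,U_{n-1}$ of maps on the set $\mathcal{M}(P)$ of maximal chains with: $U_i(\mathfrak m)$ agrees with $\mathfrak m$ except possibly at rank $i$; $U_i^2=U_i$; $U_iU_j=U_jU_i$ for $|i-j|\ge2$; $U_iU_{i+1}U_i=U_{i+1}U_iU_{i+1}$; and $\omega F_P=\mathrm{ch}(\chi_P)$ ($\chi_P$ the character of the $\mathcal{H}_n(0)$-module $\mathbb{C}\mathcal{M}(P)$ with $T_i=-U_i$, $F_P$ Ehrenborg's flag quasisymmetric function $\sum x_1^{\mathrm{rk}(t_0,t_1)}\cdots x_k^{\mathrm{rk}(t_{k-1},t_k)}$ over multichains $\hat0=t_0\le\cdots\le t_{k-1}<t_k=\hat1$, $\omega(L_{S,n})=L_{[n-1]\setminus S,n}$ on Gessel's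 fundamental quasisymmetric functions, $\mathrm{ch}(\chi_S)=L_{S,n}$ for the one-dimensional characters $\chi_S$: $T_i\mapsto-1$ for $i\in S$, $0$ otherwise). The descent set of $\mathfrak m$ is $\{i:U_i(\mathfrak m)\ne\mathfrak m\}$; such a $P$ has exactly one maximal chain $\mathfrak m_0$ with empty descent set. An expression $U_{i_1}\cdots U_{i_r}(\mathfrak m)=\mathfrak m'$ is restless if $U_{i_r}(\mathfrak m)\ne\mathfrak m$ (when $r\ge1$) and $U_{i_j}\cdots U_{i_r}(\mathfrak m)\ne U_{i_{j+1}}\cdots U_{i_r}(\mathfrak m)$ for $j=1,\dots,r-1$. *)

From HB Require Import structures.
From mathcomp Require Import all_boot all_order all_fingroup all_algebra.
Set Implicit Arguments. Unset Strict Implicit. Unset Printing Implicit Defensive.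
Import Order.TTheory GRing.Theory.

(* A finite poset with 0^ (= \bot) and 1^ (= \top) is a finTBPOrderType. *)

Section Poset.
Context {disp : Order.disp_t} (P : finTBPOrderType disp).

(* covers x y  <->  y covers x  (x <. y) *)
Definition covers (x y : P) : bool :=
  ((x < y)%O && [forall z : P, ~~ ((x < z)%O && (z < y)%O)]).

Definition graded_rank (n : nat) : Prop :=
  forall c : seq P, path covers \bot%O c -> last \bot%O c = \top%O -> size c = n.

Definition bowtie_free : Prop :=
  ~ exists a b c e : P,
      uniq [:: a; b; c; e] /\ covers c a /\ covers e a /\ covers c b /\ covers e b.

(* maximal chains of a graded poset of rank n: m_0 = \bot <. m_1 <. ... <. m_n = \top;
   m_k is the element of rank k of the chain *)
Definition is_maxchain (n : nat) (m : n.+1.-tuple P) : bool :=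
  [&& sorted covers m, head \bot%O m == \bot%O & last \bot%O m == \top%O].

Definition mchain (n : nat) := {m : n.+1.-tuple P | is_maxchain m}.

Definition rk_is (s t : P) (r : nat) : bool :=
  [exists c : r.-tuple P, path covers s c && (last s c == t)].

(* Monomials x^e = prod_k x_(k+1)^(e_k), encoded by e : seq nat.
   Number of multichains \bot = t_0 <= ... <= t_(k-1) < t_k = \top with
   x_1^rk(t_0,t_1) ... x_k^rk(t_(k-1),t_k) = x^e. *)
Definition multichain_count (k : nat) (e : seq nat) : nat :=
  #|[set t : k.+1.-tuple P |
     [&& nth \bot%O t 0 == \bot%O, last \bot%O t == \top%O, sorted <=%O t,
         (nth \bot%O t k.-1 < nth \bot%O t k)%O,
         [forall j : 'I_k, rk_is (nth \bot%O t j) (nth \bot%O t j.+1) (nth 0%N e j)] &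
         all (eq_op 0%N) (drop k e)]]|.

(* coefficient of x^e in Ehrenborg's flag quasisymmetric function F_P
   (multichains with k > size e cannot contribute since rk(t_(k-1),t_k) >= 1) *)
Definition Fcoef (e : seq nat) : nat :=
  \sum_(1 <= k < (size e).+1) multichain_count k e.

End Poset.

(* coefficient of x^e in Gessel's fundamental quasisymmetric function L_{S,n};
   S subset of [n-1] encoded by {set 'I_n.-1} (j : 'I_n.-1 stands for j+1).
   A sequence i_1 <= ... <= i_n of positive integers is encoded 0-based. *)
Definition Lcoef (n : nat) (S : {set 'I_n.-1}) (e : seq nat) : nat :=
  #|[set i : n.-tuple 'I_(size e) |
     [&& sorted leq (map val i),
         [forall j : 'I_n.-1, (j \in S) ==>
             (nth 0%N (map val i) j < nth 0%N (map val i) j.+1)%N] &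
         [forall x : 'I_(size e), count_mem x i == nth 0%N e x]]]|.

Fixpoint actw (T : Type) (U : nat -> T -> T) (w : seq nat) (m : T) : T :=
  match w with [::] => m | i :: w' => U i (actw U w' m) end.

Fixpoint restless (T : eqType) (U : nat -> T -> T) (w : seq nat) (m : T) : bool :=
  match w with
  | [::] => true
  | i :: w' => restless U w' m && (U i (actw U w' m) != actw U w' m)
  end.

Section Action.
Context {disp : Order.disp_t} (P : finTBPOrderType disp) (n : nat).

(* chi_P(T_{i_1} ... T_{i_k}) for T_i = - U_i acting on C M(P): the trace of
   (-1)^k U_{i_1}...U_{i_k}, i.e. (-1)^k times its number of fixed maximal chains *)
Definition chiP (U : nat -> mchain P n -> mchain P n) (w : seq nat) : int :=
  ((-1) ^+ size w * (#|[set m : mchain P n | actw U w m == m]|)%:Z)%R.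

Definition inS (S : {set 'I_n.-1}) (i : nat) : bool := [exists k in S, k.+1 == i].

Definition chiS (S : {set 'I_n.-1}) (w : seq nat) : int :=
  (\prod_(i <- w) (if inS S i then -1 else 0))%R.

Definition good_action (U : nat -> mchain P n -> mchain P n) : Prop :=
  [/\ (forall i, (0 < i < n)%N -> forall (m : mchain P n) (k : 'I_n.+1),
          val k != i -> tnth (val (U i m)) k = tnth (val m) k),
      (forall i, (0 < i < n)%N -> forall m, U i (U i m) = U i m),
      (forall i j, (0 < i < n)%N -> (0 < j < n)%N -> (i.+1 < j \/ j.+1 < i)%N ->
          forall m, U i (U j m) = U j (U i m)),
      (forall i, (0 < i)%N -> (i.+1 < n)%N ->
          forall m, U i (U i.+1 (U i m)) = U i.+1 (U i (U i.+1 m))) &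
      (* omega F_P = ch(chi_P): chi_P = sum_S c_S chi_S (as functionals on H_n(0),
         i.e. on all words in the T_i), so ch(chi_P) = sum_S c_S L_{S,n};
         F_P = sum_S d_S L_{S,n}, so omega F_P = sum_S d_S L_{[n-1]\S,n} *)
      exists c dd : {set 'I_n.-1} -> int,
        [/\ forall w, all (fun i => 0 < i < n)%N w ->
              chiP U w = (\sum_S c S * chiS S w)%R,
            forall e, ((Fcoef P e)%:Z = \sum_S dd S * (Lcoef S e)%:Z)%R &
            forall e, (\sum_S dd S * (Lcoef (~: S) e)%:Z =
                       \sum_S c S * (Lcoef S e)%:Z)%R]].

End Action.

(* the adjacent transposition s_i = (i i+1) of [n] = {1,...,n}, realized on 'I_n
   (0-based: exchanges i-1 and i); identity if out of range *)
Definition adjT (n i : nat) : 'S_n :=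
  match (insub i.-1 : option 'I_n), (insub i : option 'I_n) with
  | Some a, Some b => tperm a b
  | _, _ => 1%g
  end.

From HB Require Import structures.
From mathcomp Require Import all_boot all_order all_fingroup all_algebra.
From mathcomp Require Import zify.
Set Implicit Arguments. Unset Strict Implicit.
Import Order.TTheory.

(* Exchange property: if a restless path from a to m0 begins with U_i and U_j
   moves a, then some restless path from U_j a to m0 is one step shorter and its
   permutation followed by s_j is that of the original path.  For |i - j| >= 2
   this follows from commutation.  For |i - j| = 1, bowtie-freeness forbids a
   chain to be replaced at rank i by its U_i-value and at rank j by its
   U_j-value simultaneously; hence U_j U_i a and U_i U_j U_i a are again moves,
   and the braid relation closes the square using the induction hypothesis
   twice.  Induction on the length then shows that all restless paths from m
   to m0 yield the same permutation. *)

Lemma adjT_tperm n i : (0 < i < n)%N ->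
  exists a b : 'I_n, [/\ val a = i.-1, val b = i & adjT n i = tperm a b].
Proof.
case/andP=> _ lt_i_n.
have lt_pi_n : (i.-1 < n)%N by rewrite (leq_ltn_trans (leq_pred i)).
by rewrite /adjT !insubT /=; exists (Ordinal lt_pi_n), (Ordinal lt_i_n).
Qed.

Lemma adjT_commute n i j : (0 < i < n)%N -> (0 < j < n)%N ->
  (i.+1 < j \/ j.+1 < i)%N -> commute (adjT n i) (adjT n j).
Proof.
move=> ri rj far.
have [a [b [va vb ->]]] := adjT_tperm ri.
have [c [d [vc vd ->]]] := adjT_tperm rj.
rewrite /commute conjgC; congr (_ * _)%g.
by rewrite tpermJ !tpermD // -val_eqE ?va ?vb ?vc ?vd; lia.
Qed.

Lemma tperm_braid (T : finType) (a b c : T) : a != b -> b != c -> a != c ->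
  (tperm a b * tperm b c * tperm a b = tperm b c * tperm a b * tperm b c)%g.
Proof.
move=> ab bc ac.
have selfconj (x y : T) s : (tperm x y * s * tperm x y = s ^ tperm x y)%g.
  by rewrite conjgE tpermV mulgA.
by rewrite !selfconj !tpermJ tpermR tpermL (tpermD ac bc) tpermD // eq_sym.
Qed.

Lemma adjT_braid n i j : (0 < i < n)%N -> (0 < j < n)%N -> (i.+1 = j \/ j.+1 = i) ->
  (adjT n i * adjT n j * adjT n i = adjT n j * adjT n i * adjT n j)%g.
Proof.
wlog <- : i j / i.+1 = j.
  move=> wlog ri rj [Sij | Sji]; first by apply: wlog => //; left.
  by symmetry; apply: wlog => //; left.
move=> ri rSi _.
have [a [b [va vb ->]]] := adjT_tperm ri.
have [b' [c [vb' vc ->]]] := adjT_tperm rSi.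
have -> : b' = b by apply: val_inj; rewrite vb vb'.
apply: tperm_braid; rewrite -val_eqE ?va ?vb ?vc; lia.
Qed.

Section MaximalChains.
Variables (disp : Order.disp_t) (P : finTBPOrderType disp) (n : nat).

Lemma covers_neq (x y : P) : covers x y -> x != y.
Proof. by case/andP => /lt_eqF ->. Qed.

Lemma bowtie_freeP (a b c e : P) : bowtie_free P -> a != b -> c != e ->
  covers c a -> covers e a -> covers c b -> covers e b -> False.
Proof.
move=> bowtie ab ce ca ea cb eb; apply: bowtie.
exists a, b, c, e; split=> //=.
rewrite !inE !negb_or ab ce /= !andbT.
by rewrite ![a == _]eq_sym ![b == _]eq_sym !covers_neq.
Qed.

Definition chain_at (x : mchain P n) (r : nat) : P := nth \bot%O (val x) r.

Lemma mchain_eq (x y : mchain P n) :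
  (forall r, (r <= n)%N -> chain_at x r = chain_at y r) -> x = y.
Proof.
move=> eq_at; apply/val_inj/eq_from_tnth => k.
by rewrite !(tnth_nth \bot%O); apply/eq_at/(ltn_ord k).
Qed.

Lemma covers_chain_at (x : mchain P n) r :
  (r < n)%N -> covers (chain_at x r) (chain_at x r.+1).
Proof.
move=> lt_r_n; case: x => t chain_t; case/and3P: (chain_t) => sorted_t _ _.
by rewrite /chain_at /=; apply: (sortedP \bot%O sorted_t); rewrite size_tuple.
Qed.

End MaximalChains.

Section LocalMoves.
Variables (disp : Order.disp_t) (P : finTBPOrderType disp) (n : nat).
Variable U : nat -> mchain P n -> mchain P n.
Hypothesis P_bowtie_free : bowtie_free P.
Hypothesis U_local : forall i, (0 < i < n)%N -> forall (m : mchain P n) (k : 'I_n.+1),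
  val k != i -> tnth (val (U i m)) k = tnth (val m) k.
Hypothesis U_idem : forall i, (0 < i < n)%N -> forall m, U i (U i m) = U i m.
Hypothesis U_commute : forall i j, (0 < i < n)%N -> (0 < j < n)%N ->
  (i.+1 < j \/ j.+1 < i)%N -> forall m, U i (U j m) = U j (U i m).
Hypothesis U_braid : forall i, (0 < i)%N -> (i.+1 < n)%N ->
  forall m, U i (U i.+1 (U i m)) = U i.+1 (U i (U i.+1 m)).

Lemma chain_at_U i m r : (0 < i < n)%N -> (r <= n)%N -> r != i ->
  chain_at (U i m) r = chain_at m r.
Proof.
move=> ri le_r_n r_neq_i.
have := @U_local i ri m (Ordinal (le_r_n : (r < n.+1)%N)).
by rewrite !(tnth_nth \bot%O); apply.
Qed.

Lemma chain_at_U_moved i m : (0 < i < n)%N -> U i m != m ->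
  chain_at (U i m) i != chain_at m i.
Proof.
move=> ri; apply: contra_neq => same_i; apply: mchain_eq => r le_r_n.
by have [-> // | r_neq_i] := eqVneq r i; rewrite chain_at_U.
Qed.

Lemma U_braid_adj i j : (0 < i < n)%N -> (0 < j < n)%N -> (i.+1 = j \/ j.+1 = i) ->
  forall m, U i (U j (U i m)) = U j (U i (U j m)).
Proof.
move=> + + adj m; case: adj => <- ri rj; first by apply: U_braid; lia.
by symmetry; apply: U_braid; lia.
Qed.

Lemma no_double_move i j (a y : mchain P n) : (0 < i < n)%N -> (0 < j < n)%N ->
  (i.+1 = j \/ j.+1 = i) -> U i a != a -> U j a != a ->
  chain_at y i = chain_at (U i a) i -> chain_at y j = chain_at (U j a) j -> False.
Proof.
wlog <- : i j / i.+1 = j.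
  move=> wlog ri rj [Sij | Sji] ai aj yi yj; first by apply: (wlog i j) => //; left.
  by apply: (wlog j i) => //; left.
(* a_(i+1) and (U_(i+1) a)_(i+1) both cover a_i and (U_i a)_i. *)
move=> ri rSi _ ai aSi yi ySi; have lt_i_n : (i < n)%N by lia.
apply: (bowtie_freeP P_bowtie_free (a := chain_at a i.+1) (b := chain_at (U i.+1 a) i.+1)
                                   (c := chain_at a i) (e := chain_at (U i a) i)).
- by rewrite eq_sym chain_at_U_moved.
- by rewrite eq_sym chain_at_U_moved.
- exact: covers_chain_at.
- by rewrite -[chain_at a i.+1](chain_at_U a ri) ?covers_chain_at //; lia.
- by rewrite -[chain_at a i](chain_at_U a rSi) ?covers_chain_at //; lia.
- by rewrite -yi -ySi; apply: covers_chain_at.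
Qed.

Lemma commute_restless i j a : (0 < i < n)%N -> (0 < j < n)%N ->
  (i.+1 < j \/ j.+1 < i)%N -> U j a != a -> U j (U i a) != U i a.
Proof.
move=> ri rj far aj; apply/eqP => fixed_j.
have : chain_at (U j a) j = chain_at a j.
  rewrite -(chain_at_U (U j a) ri) ?(U_commute ri rj far) ?fixed_j ?chain_at_U //; lia.
by apply/eqP; rewrite chain_at_U_moved.
Qed.

Lemma braid_restless i j a : (0 < i < n)%N -> (0 < j < n)%N ->
  (i.+1 = j \/ j.+1 = i) -> U i a != a -> U j a != a ->
  U j (U i a) != U i a /\ U i (U j (U i a)) != U j (U i a).
Proof.
move=> ri rj adj ai aj; set y := U i (U j a).
have y_i : chain_at y i != chain_at (U i a) i.
  apply/eqP => yi; apply: (no_double_move ri rj adj ai aj yi).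
  by rewrite /y chain_at_U //; lia.
have Ujy : U j y = U i (U j (U i a)) by rewrite U_braid_adj.
have Ujy_i : chain_at (U j y) i = chain_at y i by rewrite chain_at_U //; lia.
split; apply/eqP => fixed; move/eqP: y_i; apply; rewrite -Ujy_i Ujy fixed.
  by rewrite U_idem.
by rewrite chain_at_U //; lia.
Qed.

(* Steps are listed in order of application, the reverse of [actw]. *)
Inductive restless_path : mchain P n -> seq nat -> mchain P n -> Prop :=
| restless_path_nil m : restless_path m [::] m
| restless_path_cons i m l m' : (0 < i < n)%N -> U i m != m ->
    restless_path (U i m) l m' -> restless_path m (i :: l) m'.

Lemma restless_path_nilE m m' : restless_path m [::] m' -> m = m'.
Proof. by move=> path; inversion path. Qed.

Lemma restless_path_consE i l m m' : restless_path m (i :: l) m' ->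
  [/\ (0 < i < n)%N, U i m != m & restless_path (U i m) l m'].
Proof. by move=> path; inversion path. Qed.

Lemma restless_path_rcons m l x i : restless_path m l x ->
  (0 < i < n)%N -> U i x != x -> restless_path m (rcons l i) (U i x).
Proof.
elim=> [y | j y l' y' rj yj _ IH] ri xi /=.
  by apply: restless_path_cons => //; apply: restless_path_nil.
by apply: restless_path_cons => //; apply: IH.
Qed.

Lemma restless_actw_path w m : all (fun i => 0 < i < n)%N w -> restless U w m ->
  restless_path m (rev w) (actw U w m).
Proof.
elim: w => [|i w IH] /=; first by move=> _ _; apply: restless_path_nil.
case/andP=> ri rw /andP [restless_w moved].
by rewrite rev_cons; apply: restless_path_rcons => //; apply: IH.
Qed.

Definition word_perm (l : seq nat) : {perm 'I_n} := (\prod_(i <- rev l) adjT n i)%g.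

Lemma word_perm_cons i l : word_perm (i :: l) = (word_perm l * adjT n i)%g.
Proof. by rewrite /word_perm rev_cons big_rcons. Qed.

Variable m0 : mchain P n.
Hypothesis m0_fixed : forall i, (0 < i < n)%N -> U i m0 = m0.

Definition exchange_upto k := forall l a, (size l <= k)%N -> restless_path a l m0 ->
  forall j, (0 < j < n)%N -> U j a != a ->
  exists l', [/\ restless_path (U j a) l' m0, size l = (size l').+1
               & word_perm l = (word_perm l' * adjT n j)%g].

Lemma exchange_commute k i j a l : exchange_upto k -> (size l <= k)%N ->
  (0 < i < n)%N -> (0 < j < n)%N -> (i.+1 < j \/ j.+1 < i)%N ->
  U i a != a -> U j a != a -> restless_path (U i a) l m0 ->
  exists l', [/\ restless_path (U j a) l' m0, size (i :: l) = (size l').+1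
               & word_perm (i :: l) = (word_perm l' * adjT n j)%g].
Proof.
move=> exchange size_l ri rj far ai aj path.
have far' : (j.+1 < i \/ i.+1 < j)%N by lia.
have [l' [path' size_l' perm_l]] :=
  exchange _ _ size_l path j rj (commute_restless ri rj far aj).
exists (i :: l'); split; first apply: restless_path_cons => //.
- exact: commute_restless.
- by rewrite (U_commute ri rj far).
- by rewrite /= size_l'.
- by rewrite !word_perm_cons perm_l -!mulgA (adjT_commute ri rj far).
Qed.

Lemma exchange_braid k i j a l : exchange_upto k -> (size l <= k)%N ->
  (0 < i < n)%N -> (0 < j < n)%N -> (i.+1 = j \/ j.+1 = i) ->
  U i a != a -> U j a != a -> restless_path (U i a) l m0 ->
  exists l', [/\ restless_path (U j a) l' m0, size (i :: l) = (size l').+1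
               & word_perm (i :: l) = (word_perm l' * adjT n j)%g].
Proof.
move=> exchange size_l ri rj adj ai aj path.
have adj' : j.+1 = i \/ i.+1 = j by case: adj; [right | left].
have [ji_i iji_ji] := braid_restless ri rj adj ai aj.
have [ij_j jij_ij] := braid_restless rj ri adj' aj ai.
have [l3 [path3 size3 perm3]] := exchange _ _ size_l path j rj ji_i.
have size_l3 : (size l3 <= k)%N by lia.
have [l4 [path4 size4 perm4]] := exchange _ _ size_l3 path3 i ri iji_ji.
exists (i :: j :: l4); split.
- do 2 (apply: restless_path_cons => //); by rewrite -U_braid_adj.
- by rewrite /= size3 size4.
- rewrite !word_perm_cons perm3 perm4 -!mulgA; congr (_ * _)%g.
  by rewrite !mulgA adjT_braid.
Qed.

Lemma exchange_upto_all k : exchange_upto k.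
Proof.
elim: k => [|k IH] [|i l] a // size_l path j rj aj.
1,2: by move/restless_path_nilE: path aj => ->; rewrite m0_fixed ?eqxx.
have [ri ai path_i] := restless_path_consE path.
have [<- | i_neq_j] := eqVneq i j; first by exists l; split; rewrite ?word_perm_cons.
have [far | adj] : (i.+1 < j \/ j.+1 < i)%N \/ (i.+1 = j \/ j.+1 = i) by lia.
- exact: (exchange_commute IH size_l ri rj far ai aj path_i).
- exact: (exchange_braid IH size_l ri rj adj ai aj path_i).
Qed.

Lemma restless_path_word_perm m l1 l2 :
  restless_path m l1 m0 -> restless_path m l2 m0 -> word_perm l1 = word_perm l2.
Proof.
elim: l1 m l2 => [|i l1 IH] m l2 path1 path2.
  move/restless_path_nilE: path1 path2 => ->.
  by case: l2 => // j l2 /restless_path_consE [rj]; rewrite m0_fixed ?eqxx.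
have [ri moved path1'] := restless_path_consE path1.
have [l2' [path2' _ ->]] := exchange_upto_all (leqnn _) path2 ri moved.
by rewrite word_perm_cons (IH _ _ path1' path2').
Qed.

End LocalMoves.

Theorem mainTheorem12 (disp : Order.disp_t) (P : finTBPOrderType disp) (n : nat)
  (U : nat -> mchain P n -> mchain P n) :
  graded_rank P n -> bowtie_free P -> good_action U ->
  forall m0 : mchain P n, (forall i, (0 < i < n)%N -> U i m0 = m0) ->
  forall (m : mchain P n) (w1 w2 : seq nat),
    all (fun i => 0 < i < n)%N w1 -> all (fun i => 0 < i < n)%N w2 ->
    actw U w1 m = m0 -> restless U w1 m ->
    actw U w2 m = m0 -> restless U w2 m ->
    (\prod_(i <- w1) adjT n i)%g = (\prod_(i <- w2) adjT n i)%g.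
Proof.
move=> _ bowtie [local idem comm braid _] m0 m0_fixed m w1 w2 w1_idx w2_idx
  w1_m0 w1_restless w2_m0 w2_restless.
have path1 := restless_actw_path w1_idx w1_restless.
have path2 := restless_actw_path w2_idx w2_restless.
rewrite w1_m0 in path1; rewrite w2_m0 in path2.
have := restless_path_word_perm bowtie local idem comm braid m0_fixed path1 path2.
by rewrite /word_perm !revK.
Qed.
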